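(* Let $D$ be a pv-monoid (idempotent, with symmetric valuation function) that is left-$\oplus$-distributive, $P$ a nonempty finite set of ports, and $\zeta,\zeta_1,\zeta_2\in PCL(D,P)$. Then $\zeta\uplus(\zeta_1\oplus\zeta_2)\equiv(\zeta\uplus\zeta_1)\oplus(\zeta\uplus\zeta_2)$.
   Context: A valuation monoid $(D,\oplus,\mathrm{val},0)$ consists of a commutative monoid $(D,\oplus,0)$ and a map $\mathrm{val}:D^+\to D$ ($D^+$ = nonempty finite sequences over $D$) with $\mathrm{val}(d)=d$ and $\mathrm{val}(d_1,\dots,d_n)=0$ whenever some $d_i=0$. A pv-monoid $(D,\oplus,\mathrm{val},\otimes,0,1)$ is a valuation monoid with a binary operation $\otimes$ and an element $1$ such that $\mathrm{val}(1,\dots,1)=1$ for any $n\ge1$ arguments, $0\otimes d=d\otimes0=0$, $1\otimes d=d\otimes1=d$. Standing assumption: $D$ is idempotent and $\mathrm{val}$ is symmetric. $D$ is left-$\oplus$-distributive if $d\otimes(d_1\oplus d_2)=(d\otimes d_1)\oplus(d\otimes d_2)$ for all $d,d_1,d_2$. $I(P)$ is the set of nonempty subsets of $P$, $C(P)$ the set of nonempty subsets of $I(P)$. PIL formulas: $\phi::=true\mid p\mid\overline{\phi}\mid\phi\vee\phi$ ($p\in P$), $\alpha\models_i p$ iff $p\in\alpha$, other connectives as usual. PCL formulas: $f::=true\mid\phi\mid\neg f\mid f\sqcup f\mid f+f$; $\gamma\models\phi$ iff every $\alpha\in\gamma$ satisfies $\phi$; $\neg,\sqcup$ are complement and union; $\gamma\models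 f_1+f_2$ iff $\gamma=\gamma_1\cup\gamma_2$ with $\gamma_1,\gamma_2\in C(P)$, $\gamma_1\models f_1,\gamma_2\models f_2$. w$_{\text{pvm}}$PCL formulas ($PCL(D,P)$): $\zeta::=d\mid f\mid\zeta\oplus\zeta\mid\zeta\otimes\zeta\mid\zeta\uplus\zeta\mid *\zeta$; semantics $\|\zeta\|:C(P)\to D$: $\|d\|(\gamma)=d$; $\|f\|(\gamma)\in\{0,1\}$ is $1$ iff $\gamma\models f$; $\oplus,\otimes$ pointwise; $\|\zeta_1\uplus\zeta_2\|(\gamma)=\bigoplus(\|\zeta_1\|(\gamma_1)\otimes\|\zeta_2\|(\gamma_2))$ over disjoint $\gamma_1,\gamma_2\in C(P)$ with union $\gamma$; $\|*\zeta\|(\gamma)=\bigoplus_{n>0}\bigoplus\mathrm{val}(\|\zeta\|(\gamma_1),\dots,\|\zeta\|(\gamma_n))$ over pairwise disjoint $\gamma_1,\dots,\gamma_n\in C(P)$ with union $\gamma$. $\equiv$ means equality of semantics on all of $C(P)$. An empty $\oplus$-sum is $0$. *)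

From Stdlib Require Import List Permutation.
From mathcomp Require Import all_boot.
Set Implicit Arguments. Unset Strict Implicit. Unset Printing Implicit Defensive.

(* A pv-monoid (D, add, val, mul, zero, one); val is defined on all of seq D but
   its axioms only concern nonempty sequences (D^+). *)
Record pv_monoid (D : Type) (add : D -> D -> D) (val : seq D -> D)
    (mul : D -> D -> D) (zero one : D) : Prop := {
  pv_addA : forall a b c, add a (add b c) = add (add a b) c;
  pv_addC : forall a b, add a b = add b a;
  pv_add0d : forall a, add zero a = a;
  pv_val1 : forall d, val [:: d] = d;
  pv_val0 : forall s, s <> [::] -> List.In zero s -> val s = zero;
  pv_valone : forall n, val (nseq n.+1 one) = one;
  pv_mul0d : forall d, mul zero d = zero;
  pv_muld0 : forall d, mul d zero = zero;
  pv_mul1d : forall d, mul one d = d;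
  pv_muld1 : forall d, mul d one = d
}.

Definition idempotent_add (D : Type) (add : D -> D -> D) := forall d, add d d = d.

Definition symmetric_val (D : Type) (val : seq D -> D) :=
  forall s t : seq D, s <> [::] -> Permutation s t -> val s = val t.

Definition left_add_distributive (D : Type) (add mul : D -> D -> D) :=
  forall d d1 d2, mul d (add d1 d2) = add (mul d d1) (mul d d2).

Section Logic.
Variable P : finType.

Inductive pil : Type :=
| PIL_true
| PIL_port of P
| PIL_neg of pil
| PIL_or of pil & pil.

Definition isI (a : {set P}) : bool := a != set0.
Definition isC (g : {set {set P}}) : bool := (g != set0) && [forall a in g, isI a].

Fixpoint pil_sat (a : {set P}) (phi : pil) : bool :=
  match phi with
  | PIL_true => true
  | PIL_port p => p \in a
  | PIL_neg f => ~~ pil_sat a f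
  | PIL_or f1 f2 => pil_sat a f1 || pil_sat a f2
  end.

Inductive pcl : Type :=
| PCL_true
| PCL_pil of pil
| PCL_neg of pcl
| PCL_or of pcl & pcl
| PCL_plus of pcl & pcl.

(* meaningful for g in C(P) *)
Fixpoint pcl_sat (g : {set {set P}}) (f : pcl) : bool :=
  match f with
  | PCL_true => true
  | PCL_pil phi => [forall a in g, pil_sat a phi]
  | PCL_neg f => ~~ pcl_sat g f
  | PCL_or f1 f2 => pcl_sat g f1 || pcl_sat g f2
  | PCL_plus f1 f2 =>
      [exists g1 : {set {set P}}, exists g2 : {set {set P}},
         [&& isC g1, isC g2, g == g1 :|: g2, pcl_sat g1 f1 & pcl_sat g2 f2]]
  end.

Variables (D : Type) (add : D -> D -> D) (val : seq D -> D)
          (mul : D -> D -> D) (zero one : D).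

Inductive wpcl : Type :=
| W_const of D
| W_pcl of pcl
| W_add of wpcl & wpcl
| W_mul of wpcl & wpcl
| W_shuffle of wpcl & wpcl
| W_star of wpcl.

(* Bound on the number of blocks in the * operator: pairwise disjoint nonempty
   blocks with union g have at most #|g| <= #|{set {set P}}| elements, so the
   sum over n > 0 is exactly the sum over 0 < n <= #|{set {set P}}| (the other
   sums are empty, i.e. 0). *)
Definition star_bound := #|{: {set {set P}}}|.

Fixpoint wsem (z : wpcl) (g : {set {set P}}) : D :=
  match z with
  | W_const d => d
  | W_pcl f => if pcl_sat g f then one else zero
  | W_add z1 z2 => add (wsem z1 g) (wsem z2 g)
  | W_mul z1 z2 => mul (wsem z1 g) (wsem z2 g)
  | W_shuffle z1 z2 =>
      \big[add/zero]_(p : {set {set P}} * {set {set P}} |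
            [&& isC p.1, isC p.2, [disjoint p.1 & p.2] & p.1 :|: p.2 == g])
        mul (wsem z1 p.1) (wsem z2 p.2)
  | W_star z1 =>
      \big[add/zero]_(n < star_bound)
        \big[add/zero]_(t : (n.+1).-tuple {set {set P}} |
            [&& [forall i, isC (tnth t i)],
                [forall i, forall j, (i != j) ==> [disjoint tnth t i & tnth t j]]
              & \bigcup_(i < n.+1) tnth t i == g])
          val [seq wsem z1 h | h <- t]
  end.

Definition wequiv (z1 z2 : wpcl) : Prop :=
  forall g : {set {set P}}, isC g -> wsem z1 g = wsem z2 g.

End Logic.

From mathcomp Require Import all_boot.

(* The argument is pointwise: left distributivity splits each summand
   [ζ(γ1) ⊗ (ζ1(γ2) ⊕ ζ2(γ2))] of the ⊎-sum, and the sum of these splits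
   because ⊕ is associative and commutative. *)

Section CommutativeSums.

Variables (D : Type) (add : D -> D -> D) (zero : D).
Hypotheses (addA : associative add) (addC : commutative add)
           (add0d : left_id zero add).

Lemma addACA : interchange add add.
Proof. by move=> a b c d; rewrite -!addA (addA b) (addC b c) !addA. Qed.

Lemma big_split_add (I : Type) (r : seq I) (Pr : pred I) (F G : I -> D) :
  \big[add/zero]_(i <- r | Pr i) add (F i) (G i) =
  add (\big[add/zero]_(i <- r | Pr i) F i) (\big[add/zero]_(i <- r | Pr i) G i).
Proof.
apply: (big_rec3 (fun s sF sG => s = add sF sG)); first by rewrite add0d.
by move=> i s sF sG _ ->; rewrite addACA.
Qed.

End CommutativeSums.

Theorem mainTheorem6 (D : Type) (add : D -> D -> D) (val : seq D -> D)
    (mul : D -> D -> D) (zero one : D)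
    (HD : pv_monoid add val mul zero one)
    (Hidem : idempotent_add add) (Hsym : symmetric_val val)
    (Hdistr : left_add_distributive add mul)
    (P : finType) (HP : 0 < #|P|)
    (z z1 z2 : wpcl P D) :
  wequiv add val mul zero one
    (W_shuffle z (W_add z1 z2))
    (W_add (W_shuffle z z1) (W_shuffle z z2)).
Proof.
move=> g _ /=.
under eq_bigr do rewrite Hdistr.
apply: big_split_add; [exact: pv_addA HD | exact: pv_addC HD | exact: pv_add0d HD].
Qed.
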